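(* Let $(a',b',c',d')\in\mathbb{Z}_{\ge0}^4$. There exists a unique $(a,b,c,d)\in\mathbb{Z}_{\ge0}^4$ such that $0\le b\le1$, $0\le c\le q_0-1$, $0\le d\le q_0-1$ and $\lVert(a,b,c,d)\rVert=\lVert(a',b',c',d')\rVert$.
   Context: $n\ge2$ is an integer, $q_0=2^n$, $q=2q_0^2$, and for $(a,b,c,d)\in\mathbb{Z}_{\ge0}^4$ one sets $\lVert(a,b,c,d)\rVert:=aq+b(q+q_0)+c(q+2q_0)+d(q+2q_0+1)$. *)

From mathcomp Require Import all_boot.

Definition q0 (n : nat) : nat := 2 ^ n.
Definition qq (n : nat) : nat := 2 * (q0 n) ^ 2.

Definition wnorm (n a b c d : nat) : nat :=
  a * qq n + b * (qq n + q0 n) + c * (qq n + 2 * q0 n)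
  + d * (qq n + 2 * q0 n + 1).

From mathcomp Require Import all_boot.
From mathcomp Require Import zify.

(* Writing s = a + b + c + d, one has
   ||(a,b,c,d)|| = (((s q0 + c + d) 2 + b) q0 + d),
   a mixed-radix expansion whose digits d < q0 and b < 2 are read off by
   Euclidean division, after which c < q0 and then s (hence a) are determined.
   Existence follows from three carry rules, trading q0 units of d, two units of
   b, or q0 units of c for units in the higher positions. *)

Definition mixed_radix (Q a b c d : nat) : nat :=
  (((a + b + c + d) * Q + c + d) * 2 + b) * Q + d.

Lemma wnorm_mixed_radix n a b c d : wnorm n a b c d = mixed_radix (q0 n) a b c d.
Proof. rewrite /wnorm /mixed_radix /qq -mulnn; lia. Qed.

Lemma divmod_inj m q1 q2 r1 r2 : r1 < m -> r2 < m ->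
  q1 * m + r1 = q2 * m + r2 -> q1 = q2 /\ r1 = r2.
Proof.
move=> lt_r1 lt_r2 e; have := edivn_eq q2 lt_r2.
by rewrite -e edivn_eq // => -[-> ->].
Qed.

Section MixedRadix.

Variable Q : nat.

Lemma mixed_radix_carry_d a b c d k :
  mixed_radix Q a b c (d + k * Q) = mixed_radix Q (a + k * Q) (b + k) c d.
Proof. rewrite /mixed_radix; nia. Qed.

Lemma mixed_radix_carry_b a b c d k :
  mixed_radix Q a (b + k * 2) c d = mixed_radix Q (a + k) b (c + k) d.
Proof. rewrite /mixed_radix; nia. Qed.

Lemma mixed_radix_carry_c a b c d k :
  mixed_radix Q a b (c + k * Q) d = mixed_radix Q (a + k * Q + k) b c d.
Proof. rewrite /mixed_radix; nia. Qed.

Lemma mixed_radix_reduce a b c d : 0 < Q ->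
  exists a1 b1 c1 d1, [/\ b1 < 2, c1 < Q, d1 < Q &
    mixed_radix Q a1 b1 c1 d1 = mixed_radix Q a b c d].
Proof.
move=> Q_gt0.
case: (edivnP d Q) => k1 d1 ->; rewrite Q_gt0 /= => lt_d1.
rewrite [k1 * Q + _]addnC mixed_radix_carry_d.
case: (edivnP (b + k1) 2) => k2 b1 -> /= lt_b1.
rewrite [k2 * 2 + _]addnC mixed_radix_carry_b.
case: (edivnP (c + k2) Q) => k3 c1 ->; rewrite Q_gt0 /= => lt_c1.
rewrite [k3 * Q + _]addnC mixed_radix_carry_c.
by exists (a + k1 * Q + k2 + k3 * Q + k3), b1, c1, d1.
Qed.

Lemma mixed_radix_inj a1 b1 c1 d1 a2 b2 c2 d2 :
  b1 < 2 -> b2 < 2 -> c1 < Q -> c2 < Q -> d1 < Q -> d2 < Q ->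
  mixed_radix Q a1 b1 c1 d1 = mixed_radix Q a2 b2 c2 d2 ->
  (a1, b1, c1, d1) = (a2, b2, c2, d2).
Proof.
move=> lt_b1 lt_b2 lt_c1 lt_c2 lt_d1 lt_d2.
case/divmod_inj=> // /divmod_inj[] // e eb ed; subst b2 d2.
move/addIn: e => /divmod_inj[] // e ec; subst c2.
by move/addIn/addIn/addIn: e => ->.
Qed.

End MixedRadix.

Theorem lemma3p6 (n : nat) (hn : 2 <= n) (a' b' c' d' : nat) :
  exists abcd : nat * nat * nat * nat,
    (let '(a, b, c, d) := abcd in
       [/\ b <= 1, c <= q0 n - 1, d <= q0 n - 1 &
           wnorm n a b c d = wnorm n a' b' c' d'])
    /\ forall a b c d : nat,
         [/\ b <= 1, c <= q0 n - 1, d <= q0 n - 1 &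
             wnorm n a b c d = wnorm n a' b' c' d'] ->
         (a, b, c, d) = abcd.
Proof.
have q0_gt0 : 0 < q0 n by rewrite expn_gt0.
have [a [b [c [d [lt_b lt_c lt_d e]]]]]
  := mixed_radix_reduce (q0 n) a' b' c' d' q0_gt0.
exists (a, b, c, d); split.
  by split; rewrite ?wnorm_mixed_radix //; lia.
move=> a1 b1 c1 d1 [le_b1 le_c1 le_d1]; rewrite !wnorm_mixed_radix -e.
by apply: mixed_radix_inj => //; lia.
Qed.
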